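(* Let $H$ be a connected graph on $t\ge 2$ vertices. If $h_H(\mathbf{x};K_q)$ has M-convex support for some $q\ge t$, then $h_H(\mathbf{x};G)$ has M-convex support for every antiferromagnetic weighted graph $G$.
   Context: A weighted graph $G$ on $[n]$ is a symmetric matrix with nonnegative entries $G(i,j)$ (loops allowed); it is antiferromagnetic if it has at most one positive eigenvalue, counted with multiplicity. $K_q$ is the loopless complete graph on $q$ vertices with $\{0,1\}$ weights. For a graph $H$, the $G$-chromatic function is the polynomial in $\mathbf{x}=(x_1,\dots,x_n)$ \[h_H(\mathbf{x};G)=\sum_{\phi:V(H)\to[n]}\prod_{uv\in E(H)}G(\phi(u),\phi(v))\prod_{v\in V(H)}x_{\phi(v)}.\] The support of a polynomial is the set of exponent vectors in $\mathbb{N}_0^n$ of monomials with nonzero coefficient. A set $S\subseteq\mathbb{N}_0^n$ is M-convex if for all $\mathbf{a},\mathbf{b}\in S$ and every $i$ with $a_i>b_i$ there is $j$ with $a_j<b_j$ and $\mathbf{a}-\mathbf{e}_i+\mathbf{e}_j\in S$. *)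

From HB Require Import structures.
From mathcomp Require Import all_boot all_order all_algebra.
From mathcomp Require Import Rstruct.
From mathcomp.multinomials Require Import mpoly.
Set Implicit Arguments. Unset Strict Implicit. Unset Printing Implicit Defensive.
Import Order.TTheory GRing.Theory Num.Theory.
Local Open Scope ring_scope.

Notation Real := Rdefinitions.R.

Definition simple_graph (t : nat) (e : rel 'I_t) : Prop :=
  (forall u v, e u v = e v u) /\ (forall u, ~~ e u u).

Definition connected_graph (t : nat) (e : rel 'I_t) : Prop :=
  forall u v, connect e u v.

Definition weighted_graph (n : nat) (G : 'M[Real]_n) : Prop :=
  G^T = G /\ (forall i j, 0 <= G i j).

(* Antiferromagnetic: at most one positive eigenvalue counted with
   multiplicity, i.e. the characteristic polynomial factors as
   prod (X - lambda) over the eigenvalue list s (with multiplicity)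
   and at most one lambda in s is positive. *)
Definition antiferromagnetic (n : nat) (G : 'M[Real]_n) : Prop :=
  exists s : seq Real,
    char_poly G = \prod_(x <- s) ('X - x%:P) /\ (count (fun x : Real => (0 < x)%R) s <= 1)%N.

Definition Kq (q : nat) : 'M[Real]_q := \matrix_(i, j) (i != j)%:R.

(* The G-chromatic function h_H(x; G), a polynomial in x_1..x_n. Each edge
   uv of H (unordered pair u < v with e u v) contributes G(phi u, phi v). *)
Definition chromatic_fun (t : nat) (e : rel 'I_t) (n : nat) (G : 'M[Real]_n)
  : {mpoly Real[n]} :=
  \sum_(phi : {ffun 'I_t -> 'I_n})
     (\prod_(p : 'I_t * 'I_t | ((p.1 < p.2)%N && e p.1 p.2)) G (phi p.1) (phi p.2))%:MP
     * \prod_(v : 'I_t) 'X_(phi v).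

Definition hsupport (n : nat) (p : {mpoly Real[n]}) : pred 'X_{1..n} :=
  fun m => m \in msupp p.

Definition M_convex (n : nat) (S : pred 'X_{1..n}) : Prop :=
  forall a b : 'X_{1..n}, S a -> S b ->
  forall i : 'I_n, (b i < a i)%N ->
  exists j : 'I_n, (a j < b j)%N /\
    exists c : 'X_{1..n}, S c /\
      c i = (a i).-1 /\ c j = (a j).+1 /\
      (forall k, k != i -> k != j -> c k = a k).

From mathcomp Require Import all_boot all_order all_algebra perm.
From mathcomp Require Import Rstruct.
From mathcomp.multinomials Require Import mpoly.
From mathcomp.real_closed Require Import complex.
From mathcomp Require Import ring lra.
Set Implicit Arguments. Unset Strict Implicit. Unset Printing Implicit Defensive.
Import Order.TTheory GRing.Theory Num.Theory.

(* The support of h_H(x; G) consists of the vertex counts of the homomorphisms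
   from H to the positivity graph of G (u ~ v iff G(u, v) > 0), and M-convexity
   is the exchange property of these count vectors.  If G has at most one
   positive eigenvalue, its quadratic form is negative semidefinite on the
   orthogonal complement of any positive vector; this forces every non-isolated
   vertex of the positivity graph to be adjacent to an endpoint of every edge:
   looped vertices see all non-isolated ones, and non-adjacency is an
   equivalence among the others (a complete multipartite graph).  A
   homomorphism into such a graph then collapses to a proper colouring of H,
   colouring a vertex by the part of its image, or by a private colour when
   its image is looped, and exchanges between collapsed colourings lift back.
   Finally, proper colourings with any colour set have the exchange property
   once those with q >= t colours do, since two colourings that do not admit
   an obvious exchange use at most t colours between them. *)

Lemma ltn_sum (I : finType) (P : pred I) (f g : I -> nat) i :
  P i -> f i < g i -> (forall v, P v -> f v <= g v) ->
  \sum_(v | P v) f v < \sum_(v | P v) g v.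
Proof.
move=> Pi fgi fg; rewrite (bigD1 i) // [X in _ < X](bigD1 i) //= -addSn leq_add //.
by apply: leq_sum => v /andP [Pv _]; apply: fg.
Qed.

Section FiberCount.
Variables (D T : finType).

Definition fcount (f : D -> T) (k : T) : nat := #|[pred x | f x == k]|.

Definition fupd (f : D -> T) (x0 : D) (j : T) : D -> T :=
  fun x => if x == x0 then j else f x.

Definition exchange_step (a b : T -> nat) (i j : T) : Prop :=
  [/\ b i = (a i).-1, b j = (a j).+1 & forall k, k != i -> k != j -> b k = a k].

Definition exchangeable (P : (D -> T) -> Prop) (c1 c2 : D -> T) : Prop :=
  forall i, fcount c2 i < fcount c1 i ->
  exists2 j, fcount c1 j < fcount c2 j &
    exists2 c3, P c3 & exchange_step (fcount c1) (fcount c3) i j.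

Definition count_exchange (P : (D -> T) -> Prop) : Prop :=
  forall c1 c2, P c1 -> P c2 -> exchangeable P c1 c2.

Lemma fcount_gt0P (f : D -> T) k : reflect (exists x, f x = k) (0 < fcount f k).
Proof.
apply: (iffP card_gt0P) => [[x]|[x fx]]; last by exists x; rewrite inE fx.
by rewrite inE => /eqP; exists x.
Qed.

Lemma sum_fcount (f : D -> T) (P : pred T) :
  \sum_(k | P k) fcount f k = #|[pred x | P (f x)]|.
Proof.
apply/esym; rewrite -sum1_card (partition_big f P) => [|x]; last by rewrite inE.
apply: eq_bigr => k Pk; rewrite /fcount -sum1_card; apply: eq_bigl => x; rewrite !inE.
by case: eqP => [->|]; rewrite ?Pk ?andbF.
Qed.

Lemma fcount_fupd (f : D -> T) x0 i j : f x0 = i -> i != j ->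
  exchange_step (fcount f) (fcount (fupd f x0 j)) i j.
Proof.
move=> fx0 ij.
have upd k : fcount (fupd f x0 j) k + (i == k) = fcount f k + (j == k).
  rewrite /fcount (cardD1 x0) [in RHS](cardD1 x0) !inE /fupd eqxx -fx0.
  have -> : #|[predD1 [pred x | (if x == x0 then j else f x) == k] & x0]| =
            #|[predD1 [pred x | f x == k] & x0]|.
    by apply: eq_card => y; rewrite !inE; case: (y == x0).
  by case: (j == k); case: (f x0 == k); rewrite /= ?addnA ?addn0 // addnC.
rewrite /exchange_step; split=> [|| k ki kj].
- by have := upd i; rewrite eqxx eq_sym (negbTE ij) addn0 addn1 => <-.
- by have := upd j; rewrite eqxx (negbTE ij) addn0 addn1.
- by have := upd k; rewrite eq_sym (negbTE ki) eq_sym (negbTE kj) !addn0.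
Qed.

Lemma eq_exchange_step (a b b' : T -> nat) i j :
  b =1 b' -> exchange_step a b i j -> exchange_step a b' i j.
Proof.
move=> bb' [bi bj bk]; rewrite /exchange_step.
by split=> [|| k ki kj]; rewrite -bb' // bk.
Qed.

Lemma exchange_step_uniq (a b b' : T -> nat) i j :
  exchange_step a b i j -> exchange_step a b' i j -> b =1 b'.
Proof.
move=> [bi bj bk] [b'i b'j b'k] k.
have [->|ki] := eqVneq k i; first by rewrite bi b'i.
have [->|kj] := eqVneq k j; first by rewrite bj b'j.
by rewrite bk ?b'k.
Qed.

Lemma eq_count_exchange (P Q : (D -> T) -> Prop) :
  (forall c, P c <-> Q c) -> count_exchange P -> count_exchange Q.
Proof.
move=> PQ exP c1 c2 /PQ Pc1 /PQ Pc2 i lt_i.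
have [j lt_j [c3 /PQ Qc3 step]] := exP c1 c2 Pc1 Pc2 i lt_i.
by exists j => //; exists c3.
Qed.

End FiberCount.

Lemma fcount_comp_perm (t : nat) (T : finType) (f : 'I_t -> T) (p : 'S_t) :
  fcount (f \o p) =1 fcount f.
Proof.
move=> k; rewrite /fcount -(card_imset [pred x | f (p x) == k] (@perm_inj _ p)).
apply: eq_card => u; rewrite !inE; apply/imsetP/idP => [[x fx ->] //|fu].
by exists ((p^-1)%g u); rewrite ?inE permKV.
Qed.

Lemma perm_of_fcount (t : nat) (T : finType) (f g : 'I_t -> T) :
  fcount f =1 fcount g -> exists p : 'S_t, g \o p =1 f.
Proof.
move=> fg.
have fg_seq : perm_eq [seq f x | x <- enum 'I_t] [tuple g x | x < t].
  rewrite /= -val_ord_tuple; apply/allP => k _ /=.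
  have countE (h : 'I_t -> T) : count (pred1 k) [seq h x | x <- enum 'I_t] = fcount h k.
    rewrite count_map /fcount cardE -size_filter /enum_mem filter_predT.
    by congr size; apply: eq_filter => x; rewrite !inE.
  by rewrite !countE fg.
have [p Hp] := tuple_permP fg_seq; exists p => x /=.
have := congr1 (fun s => nth (f x) s x) Hp.
rewrite (nth_map x) ?size_enum_ord ?ltn_ord // nth_ord_enum => ->.
by rewrite -tnth_nth !tnth_mktuple.
Qed.

Lemma exists_inj_in (T T' : finType) (X : {set T}) (Y : {set T'}) (y0 : T') :
  #|X| <= #|Y| ->
  exists2 f : T -> T', {in X &, injective f} & {in X, forall x, f x \in Y}.
Proof.
move=> XY; have idx x : x \in X -> index x (enum X) < size (enum Y).
  by move=> xX; rewrite -cardE (leq_trans _ XY) // cardE index_mem mem_enum.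
exists (fun x => nth y0 (enum Y) (index x (enum X))) => [x x' xX x'X /eqP|x xX].
  rewrite nth_uniq ?idx ?enum_uniq // => /eqP.
  by apply: (index_inj x); rewrite mem_enum.
by rewrite -mem_enum mem_nth ?idx.
Qed.

Section Colorings.
Variables (t : nat) (e : rel 'I_t).

Definition hom (T : Type) (A : rel T) (c : 'I_t -> T) : Prop :=
  forall x y, e x y -> A (c x) (c y).

Definition proper (T : eqType) (c : 'I_t -> T) : Prop := hom [rel a b | a != b] c.

Lemma fcount_comp_in (T T' : finType) (f : T -> T') (S : {set T}) (c : 'I_t -> T) k :
  {in S &, injective f} -> (forall x, c x \in S) -> k \in S ->
  fcount (f \o c) (f k) = fcount c k.
Proof.
move=> finj cS kS; apply: eq_card => x; rewrite !inE /=.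
by apply/eqP/eqP => [/finj -> //|->].
Qed.

Lemma proper_comp_in (T T' : finType) (f : T -> T') (S : {set T}) (c : 'I_t -> T) :
  {in S &, injective f} -> (forall x, c x \in S) -> proper c -> proper (f \o c).
Proof. by move=> finj cS pc x y /pc; apply: contra => /eqP /finj ->. Qed.

Lemma exchangeable_relabel (T T' : finType) (f : T -> T') (S : {set T}) (c1 c2 : 'I_t -> T) :
  {in S &, injective f} -> (forall x, c1 x \in S) -> (forall x, c2 x \in S) ->
  proper c1 -> proper c2 -> count_exchange (@proper T') -> exchangeable (@proper T) c1 c2.
Proof.
move=> finj c1S c2S pc1 pc2 exT' i lt_i.
have /fcount_gt0P [x0 c1x0] : 0 < fcount c1 i := leq_ltn_trans (leq0n _) lt_i.
have iS : i \in S by rewrite -c1x0.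
have lt_fi : fcount (f \o c2) (f i) < fcount (f \o c1) (f i).
  by rewrite !(fcount_comp_in finj).
have [j' lt_j' [c3 pc3 [c3i c3j c3k]]] :=
  exT' _ _ (proper_comp_in finj c1S pc1) (proper_comp_in finj c2S pc2) _ lt_fi.
have /fcount_gt0P [y /= fj] : 0 < fcount (f \o c2) j' := leq_ltn_trans (leq0n _) lt_j'.
subst j'.
have c3S x : c3 x \in image f S.
  have [->|ne_i] := eqVneq (c3 x) (f i); first exact: image_f.
  have [->|ne_j] := eqVneq (c3 x) (f (c2 y)); first exact/image_f/c2S.
  have /fcount_gt0P [z <-] : 0 < fcount (f \o c1) (c3 x).
    by rewrite -c3k //; apply/fcount_gt0P; exists x.
  exact/image_f/c1S.
pose c x := iinv (c3S x); have cS x : c x \in S := mem_iinv (c3S x).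
have fc x : f (c x) = c3 x := f_iinv (c3S x).
have fcount_c k : k \in S -> fcount c k = fcount c3 (f k).
  move=> kS; rewrite -(fcount_comp_in finj cS kS).
  by apply: eq_card => x; rewrite !inE /= fc.
exists (c2 y); first by rewrite -!(fcount_comp_in finj).
exists c.
  by move=> x z /pc3; rewrite /= -!fc; apply: contra => /eqP ->.
rewrite /exchange_step; split=> [|| k ki kj].
- by rewrite fcount_c // c3i (fcount_comp_in finj).
- by rewrite fcount_c ?c2S // c3j (fcount_comp_in finj).
have [kS|kS] := boolP (k \in S).
  rewrite fcount_c // c3k -?(fcount_comp_in finj) //.
    by apply: contra ki => /eqP /finj ->.
  by apply: contra kj => /eqP /finj ->.
have fcount0 (d : 'I_t -> T) : (forall x, d x \in S) -> fcount d k = 0.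
  by move=> dS; apply: eq_card0 => x; rewrite !inE; apply: contraNF kS => /eqP <-.
by rewrite !fcount0.
Qed.

Hypothesis e_irr : irreflexive e.

Lemma count_exchange_proper (q : nat) (T : finType) :
  t <= q -> count_exchange (@proper 'I_q) -> count_exchange (@proper T).
Proof.
move=> tq exq c1 c2 pc1 pc2 i lt_i.
have /fcount_gt0P [x0 c1x0] : 0 < fcount c1 i := leq_ltn_trans (leq0n _) lt_i.
have [/existsP [j /andP [/eqP c1j c2j]]|old] :=
  boolP [exists j, (fcount c1 j == 0) && (0 < fcount c2 j)].
  have c1_neq_j x : c1 x != j.
    by apply: contra_eqN c1j => /eqP <-; rewrite -lt0n; apply/fcount_gt0P; exists x.
  exists j; first by rewrite c1j.
  exists (fupd c1 x0 j); last by apply: fcount_fupd; rewrite // -c1x0 c1_neq_j.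
  move=> x y exy; rewrite /fupd /=.
  case: (x =P x0) => [xx0|_]; case: (y =P x0) => [yx0|_].
  - by move: exy; rewrite xx0 yx0 e_irr.
  - by rewrite eq_sym c1_neq_j.
  - by rewrite c1_neq_j.
  - exact: pc1.
pose S := [set c1 x | x in 'I_t].
have c2S x : c2 x \in S.
  have : fcount c1 (c2 x) != 0.
    apply: contraNneq old => c1c2x; apply/existsP; exists (c2 x).
    by rewrite c1c2x eqxx /=; apply/fcount_gt0P; exists x.
  by rewrite -lt0n => /fcount_gt0P [z <-]; apply: imset_f.
have cardS : #|S| <= #|[set: 'I_q]|.
  by rewrite cardsT card_ord (leq_trans (leq_imset_card _ _)) // card_ord.
have [f finj _] := exists_inj_in (Ordinal (leq_trans (ltn_ord x0) tq)) cardS.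
by apply: exchangeable_relabel finj _ c2S pc1 pc2 exq _ lt_i => x; apply: imset_f.
Qed.

End Colorings.

Definition nonisolated_dominate_edges (V : Type) (A : rel V) : Prop :=
  forall v z u w, A v z -> A u w -> A v u \/ A v w.

Section HomReduction.
Variables (t : nat) (e : rel 'I_t) (V : finType) (A : rel V).
Hypotheses (e_irr : irreflexive e) (e_nb : forall x, exists y, e x y).
Hypotheses (A_sym : ssrbool.symmetric A) (A_dom : nonisolated_dominate_edges A).

Definition nonisol (v : V) : bool := [exists z, A v z].

Definition class_rep (v : V) : V :=
  odflt v [pick w | nonisol w && ~~ A w w && ~~ A v w].

Lemma looped_adj l u : A l l -> nonisol u -> A l u.
Proof. by move=> All /existsP [z Auz]; case: (A_dom Auz All); rewrite A_sym. Qed.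

Lemma nonadj_trans v w x : nonisol w -> ~~ A v w -> ~~ A w x -> ~~ A v x.
Proof.
move=> /existsP [z Awz] nvw nwx; apply/negP => Avx.
by case: (A_dom Awz Avx) => [|Awx]; [rewrite A_sym; apply/negP | move/negP: nwx].
Qed.

Lemma class_repP v : nonisol v -> ~~ A v v ->
  [/\ nonisol (class_rep v), ~~ A (class_rep v) (class_rep v) & ~~ A v (class_rep v)].
Proof.
move=> nv lv; rewrite /class_rep.
by case: pickP => [w /andP [/andP []]|/(_ v)] //= ->.
Qed.

Lemma class_rep_eqE u v : nonisol u -> ~~ A u u -> nonisol v -> ~~ A v v ->
  (class_rep u == class_rep v) = ~~ A u v.
Proof.
move=> nu lu nv lv; apply/eqP/idP => [ruv|nuv].
  have [nr _ ur] := class_repP nu lu; have [_ _ vr] := class_repP nv lv.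
  by apply: (nonadj_trans nr ur); rewrite A_sym ruv.
have same w : (nonisol w && ~~ A w w && ~~ A u w) = (nonisol w && ~~ A w w && ~~ A v w).
  case: (nonisol w && ~~ A w w) => //=; apply/idP/idP; apply: nonadj_trans => //.
  by rewrite A_sym.
rewrite /class_rep (eq_pick same); case: pickP => // /(_ v).
by rewrite nv lv.
Qed.

Lemma adjE u v : nonisol u -> nonisol v ->
  A u v = [|| A u u, A v v | class_rep u != class_rep v].
Proof.
move=> nu nv; have [luu|lu] /= := boolP (A u u); first exact: looped_adj.
have [lvv|lv] /= := boolP (A v v); first by rewrite A_sym looped_adj.
by rewrite class_rep_eqE ?negbK.
Qed.

Lemma hom_nonisol phi x : hom e A phi -> nonisol (phi x).
Proof. by move=> hphi; have [y exy] := e_nb x; apply/existsP; exists (phi y); apply: hphi. Qed.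

Lemma nonisol_fcount_lt (phi psi : 'I_t -> V) j :
  hom e A psi -> fcount phi j < fcount psi j -> nonisol j.
Proof. by move=> hpsi /(leq_ltn_trans (leq0n _)) /fcount_gt0P [y <-]; apply: hom_nonisol. Qed.

Lemma hom_fupd_looped phi x0 j : hom e A phi -> A j j -> hom e A (fupd phi x0 j).
Proof.
move=> hphi Ajj x y exy; rewrite /fupd.
case: (x =P x0) => _; case: (y =P x0) => _.
- exact: Ajj.
- by apply: looped_adj => //; apply: hom_nonisol.
- by rewrite A_sym; apply: looped_adj => //; apply: hom_nonisol.
- exact: hphi.
Qed.

Lemma hom_fupd_nonadj phi x0 j : hom e A phi -> nonisol j -> ~~ A (phi x0) j ->
  hom e A (fupd phi x0 j).
Proof.
move=> hphi nj nij.
have swap w : A (phi x0) w -> A j w.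
  by apply: contraLR; apply: nonadj_trans; rewrite // A_sym.
move=> x y exy; rewrite /fupd.
case: (x =P x0) => [xx0|_]; case: (y =P x0) => [yx0|_].
- by move: exy; rewrite xx0 yx0 e_irr.
- by apply: swap; rewrite -xx0; apply: hphi.
- by rewrite A_sym; apply: swap; rewrite -yx0 A_sym; apply: hphi.
- exact: hphi.
Qed.

(* [tau] picks the private colour of a vertex whose image is looped. *)
Definition collapse (tau : 'I_t -> 'I_t) (phi : 'I_t -> V) (x : 'I_t) : V + 'I_t :=
  if A (phi x) (phi x) then inr (tau x) else inl (class_rep (phi x)).

Lemma proper_collapse tau phi : hom e A phi ->
  {in [pred x | A (phi x) (phi x)] &, injective tau} -> proper e (collapse tau phi).
Proof.
move=> hphi tau_inj x y exy; rewrite /collapse /=.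
have := hphi x y exy; rewrite adjE ?hom_nonisol //.
case: ifP => lx; case: ifP => ly //= neq_rep.
by apply: contraTneq exy => -[/tau_inj -> //]; rewrite ?inE ?e_irr.
Qed.

Lemma hom_of_proper_collapse tau phi :
  (forall x, nonisol (phi x)) -> proper e (collapse tau phi) -> hom e A phi.
Proof.
move=> nphi pcol x y exy; rewrite adjE //; have := pcol x y exy; rewrite /collapse /=.
by case: ifP => //= _; case: ifP => //= _; apply: contra => /eqP ->.
Qed.

Lemma hom_of_collapse_fcount (gam : 'I_t -> V + 'I_t) chi :
  proper e gam -> (forall x, nonisol (chi x)) -> fcount gam =1 fcount (collapse id chi) ->
  exists2 chi', hom e A chi' & fcount chi' =1 fcount chi.
Proof.
move=> pgam nchi cnt; have [p gamp] := perm_of_fcount (fun k => esym (cnt k)).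
exists (chi \o (p^-1)%g); last exact: fcount_comp_perm.
apply: (@hom_of_proper_collapse (p^-1)%g) => [x|x y exy]; first exact: nchi.
have col z : collapse (p^-1)%g (chi \o (p^-1)%g) z = gam z.
  by rewrite -[in RHS](permKV p z); exact: (esym (gamp _)).
by rewrite /= !col; apply: pgam.
Qed.

Lemma fcount_collapse_inl tau phi r :
  fcount (collapse tau phi) (inl r) = \sum_(v | ~~ A v v && (class_rep v == r)) fcount phi v.
Proof. by rewrite sum_fcount; apply: eq_card => x; rewrite !inE /collapse; case: ifP. Qed.

Lemma fcount_collapse_inr tau phi z :
  fcount (collapse tau phi) (inr z) = #|[pred y | A (phi y) (phi y) && (tau y == z)]|.
Proof. by apply: eq_card => x; rewrite !inE /collapse; case: ifP. Qed.

Lemma fcount_collapse_id_inr phi z : fcount (collapse id phi) (inr z) = A (phi z) (phi z).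
Proof.
rewrite fcount_collapse_inr; case: (boolP (A _ _)) => [Az|nAz] /=.
  rewrite -(card1 z); apply: eq_card => y; rewrite !inE.
  by case: (eqVneq y z) => [->|]; rewrite ?Az ?andbF.
apply: eq_card0 => y; rewrite !inE.
by case: (eqVneq y z) => [->|]; rewrite ?(negbTE nAz) ?andbF.
Qed.

Lemma fcount_collapse_inr_le phi psi tau z :
  {in [set x | A (psi x) (psi x)] &, injective tau} ->
  {in [set x | A (psi x) (psi x)], forall x, tau x \in [set x | A (phi x) (phi x)]} ->
  fcount (collapse tau psi) (inr z) <= fcount (collapse id phi) (inr z).
Proof.
move=> tau_inj tau_loop; rewrite fcount_collapse_id_inr fcount_collapse_inr.
case: (pickP [pred y | A (psi y) (psi y) && (tau y == z)]) => [y /andP [Ly /eqP tyz]|none].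
  have := tau_loop y; rewrite !inE tyz => /(_ Ly) -> /=.
  rewrite -(card1 y) subset_leq_card //; apply/subsetP => y' /andP [Ly' /eqP ty'].
  by rewrite inE; apply/eqP/tau_inj; rewrite ?inE // ty' tyz.
by rewrite (eq_card0 none).
Qed.

Lemma hom_of_collapse_exchange phi x0 j (gam : 'I_t -> V + 'I_t) :
  hom e A phi -> nonisol j -> ~~ A j j -> proper e gam ->
  collapse id phi x0 != inl (class_rep j) ->
  exchange_step (fcount (collapse id phi)) (fcount gam)
    (collapse id phi x0) (inl (class_rep j)) ->
  exists2 chi, hom e A chi & fcount chi =1 fcount (fupd phi x0 j).
Proof.
move=> hphi nj lj pgam neq_j ex_gam; apply: (hom_of_collapse_fcount pgam) => [x|k].
  by rewrite /fupd; case: (x =P x0) => _; [apply: nj | apply: hom_nonisol].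
have col_upd : collapse id (fupd phi x0 j) =1 fupd (collapse id phi) x0 (inl (class_rep j)).
  by move=> x; rewrite /collapse /fupd; case: (x =P x0); rewrite ?(negbTE lj).
rewrite (exchange_step_uniq ex_gam (@fcount_fupd _ _ (collapse id phi) x0 _ _ erefl neq_j)).
by apply: eq_card => x; rewrite !inE col_upd.
Qed.

Hypothesis col_ex : count_exchange (@proper _ e (V + 'I_t)%type).

Lemma hom_exchange_via_collapse phi psi x0 (i := phi x0) :
  hom e A phi -> hom e A psi -> fcount psi i < fcount phi i ->
  (forall j, fcount phi j < fcount psi j -> ~~ A j j) ->
  (~~ A i i -> forall j, fcount phi j < fcount psi j -> A i j) ->
  exists2 j, fcount phi j < fcount psi j &
    exists2 chi, hom e A chi & fcount chi =1 fcount (fupd phi x0 j).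
Proof.
move=> hphi hpsi lt_i loopfree adj_i.
have nonisol_deficit j : fcount phi j < fcount psi j -> nonisol j := nonisol_fcount_lt hpsi.
pose Lphi := [set x | A (phi x) (phi x)]; pose Lpsi := [set x | A (psi x) (psi x)].
(* No looped vertex has a deficit, so the looped vertices of [psi] can be sent
   injectively to those of [phi], avoiding [x0] when [phi x0] is looped. *)
have card_L : #|Lpsi| <= #|if A i i then Lphi :\ x0 else Lphi|.
  have cardL (h : 'I_t -> V) : #|[set x | A (h x) (h x)]| = \sum_(v | A v v) fcount h v.
    by rewrite sum_fcount; apply: eq_card => x; rewrite !inE.
  have le v : A v v -> fcount psi v <= fcount phi v.
    by move=> Avv; rewrite leqNgt; apply: contraL Avv; apply: loopfree.
  case: ifP => Aii; last by rewrite !cardL leq_sum.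
  have : #|Lpsi| < #|Lphi| by rewrite !cardL (ltn_sum (P := fun v => A v v) Aii lt_i le).
  by rewrite (cardsD1 x0 Lphi) inE Aii.
have [tau tau_inj tauL] := exists_inj_in x0 card_L.
have tauLphi y : y \in Lpsi -> tau y \in Lphi.
  by move/tauL; case: ifP => // _; rewrite inE => /andP [].
pose alpha := collapse id phi; pose beta := collapse tau psi.
have p_alpha : proper e alpha by apply: proper_collapse.
have p_beta : proper e beta.
  by apply: proper_collapse => // x y Lx Ly; apply: tau_inj; rewrite inE.
have lt_star : fcount beta (alpha x0) < fcount alpha (alpha x0).
  case: (boolP (A i i)) => Aii.
    have -> : alpha x0 = inr x0 by rewrite /alpha /collapse Aii.
    rewrite fcount_collapse_id_inr Aii fcount_collapse_inr ltnS leqn0.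
    apply/eqP/eq_card0 => y; rewrite !inE; apply/negP => /andP [Ly /eqP tyx0].
    by have := tauL y; rewrite Aii tyx0 !inE eqxx => /(_ Ly).
  have -> : alpha x0 = inl (class_rep i) by rewrite /alpha /collapse (negbTE Aii).
  rewrite !fcount_collapse_inl (ltn_sum _ lt_i) ?Aii ?eqxx // => v /andP [lv /eqP rv].
  rewrite leqNgt; apply/negP => lt_v; have := adj_i Aii v lt_v; apply/negP.
  by rewrite -class_rep_eqE ?rv ?(hom_nonisol x0 hphi) ?(nonisol_deficit v lt_v).
have [[r|z] lt_js [gam p_gam ex_gam]] := col_ex p_alpha p_beta lt_star; last first.
  by move: lt_js; rewrite ltnNge fcount_collapse_inr_le.
have /existsP [j /andP [/andP [lj /eqP rj] lt_j]] :
    [exists j, (~~ A j j && (class_rep j == r)) && (fcount phi j < fcount psi j)].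
  apply: contraLR lt_js; rewrite !fcount_collapse_inl negb_exists -leqNgt => /forallP le.
  by apply: leq_sum => v Pv; have := le v; rewrite Pv /= -leqNgt.
exists j => //; apply: (hom_of_collapse_exchange (gam := gam)); rewrite ?rj //.
  exact: nonisol_deficit.
by apply: contraTneq lt_js => <-; rewrite -leqNgt ltnW.
Qed.

Lemma hom_count_exchange : count_exchange (hom e A).
Proof.
move=> phi psi hphi hpsi i lt_i.
have /fcount_gt0P [x0 phix0] : 0 < fcount phi i := leq_ltn_trans (leq0n _) lt_i.
suff [j lt_j [chi hchi cnt]] : exists2 j, fcount phi j < fcount psi j &
    exists2 chi, hom e A chi & fcount chi =1 fcount (fupd phi x0 j).
  exists j => //; exists chi => //; apply: (eq_exchange_step (fun k => esym (cnt k))).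
  by apply: fcount_fupd => //; apply: contraTneq lt_j => <-; rewrite -leqNgt ltnW.
have nonisol_deficit j : fcount phi j < fcount psi j -> nonisol j := nonisol_fcount_lt hpsi.
have [/existsP [j /andP [lt_j Ajj]]|no_loop] :=
  boolP [exists j, (fcount phi j < fcount psi j) && A j j].
  by exists j => //; exists (fupd phi x0 j) => //; apply: hom_fupd_looped.
have [/andP [lii /existsP [j /andP [lt_j nij]]]|no_nonadj] :=
  boolP (~~ A i i && [exists j, (fcount phi j < fcount psi j) && ~~ A i j]).
  exists j => //; exists (fupd phi x0 j) => //.
  by apply: hom_fupd_nonadj; rewrite ?phix0 //; apply: nonisol_deficit.
rewrite -phix0 in lt_i no_nonadj *; apply: hom_exchange_via_collapse => // [j lt_j|lii j lt_j].
  by apply: contraNN no_loop => Ajj; apply/existsP; exists j; rewrite lt_j.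
by apply: contraNT no_nonadj => nij; rewrite lii; apply/existsP; exists j; rewrite lt_j.
Qed.

End HomReduction.

Local Open Scope ring_scope.

Section HermitianForms.
Variable C : numClosedFieldType.
Local Open Scope sesquilinear_scope.
Local Notation hform M := (form_of_matrix Num.conj M).

Lemma hform_diag n (d X Y : 'rV[C]_n) :
  hform (diag_mx d) X Y = \sum_k X 0 k * d 0 k * (Y 0 k)^*.
Proof.
rewrite /form_of_matrix trace_mx11 mul_mx_diag !mxE.
by apply: eq_bigr => k _; rewrite !mxE.
Qed.

Lemma hform_conj n (P D : 'M[C]_n) (X Y : 'rV[C]_n) :
  hform (P^t* *m D *m P) X Y = hform D (X *m P^t*) (Y *m P^t*).
Proof. by rewrite /form_of_matrix trmx_mul map_mxM trmxCK !mulmxA. Qed.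

Lemma diag_hform_orthogonal_nonpos n (d : 'rV[C]_n) :
  d \is a realmx -> (#|[pred k | (0 < d 0 k)%R]| <= 1)%N ->
  forall X Y : 'rV[C]_n, 0 < hform (diag_mx d) X X -> hform (diag_mx d) X Y = 0 ->
  hform (diag_mx d) Y Y <= 0.
Proof.
move=> /mxOverP d_real pos1 X Y; rewrite !hform_diag => qX bXY.
pose q (Z : 'rV[C]_n) := \sum_k Z 0 k * d 0 k * (Z 0 k)^*.
have q_nonpos (Z : 'rV[C]_n) : (forall k, Z 0 k = 0 \/ d 0 k <= 0) -> q Z <= 0.
  move=> Z0; apply: sumr_le0 => k _; have [->|dk] := Z0 k; first by rewrite !mul0r.
  by rewrite -mulrA mulrCA mulr_le0_ge0 // mul_conjC_ge0.
have [k0 dk0|nopos] := pickP (fun k => 0 < d 0 k); last first.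
  have : q X <= 0 by apply: q_nonpos => k; right; rewrite real_leNgt ?nopos.
  by move/(lt_le_trans qX); rewrite ltxx.
have others k : k != k0 -> d 0 k <= 0.
  move=> kk0; rewrite real_leNgt //; apply: contraTN pos1 => dk; rewrite -ltnNge.
  have <- : #|[set k; k0]| = 2%N by rewrite cards2 kk0.
  by apply/subset_leq_card/subsetP => x; rewrite !inE => /orP [] /eqP ->.
have Xk0 : X 0 k0 != 0.
  apply: contraTneq qX => X0; rewrite le_gtF //; apply: q_nonpos => k.
  by have [->|/others] := eqVneq k k0; [left|right].
have bYX : \sum_k Y 0 k * d 0 k * (X 0 k)^* = 0.
  have -> : \sum_k Y 0 k * d 0 k * (X 0 k)^* = (\sum_k X 0 k * d 0 k * (Y 0 k)^*)^*.
    rewrite rmorph_sum; apply: eq_bigr => k _.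
    by rewrite !rmorphM /= conjCK (conj_Creal (d_real 0 k)); ring.
  by rewrite bXY conjC0.
(* [Z] vanishes at the only positive coordinate [k0]. *)
pose Z := \row_k (Y 0 k0 * X 0 k - X 0 k0 * Y 0 k).
have qZ : q Z = Y 0 k0 * (Y 0 k0)^* * q X
    - Y 0 k0 * (X 0 k0)^* * (\sum_k X 0 k * d 0 k * (Y 0 k)^*)
    - X 0 k0 * (Y 0 k0)^* * (\sum_k Y 0 k * d 0 k * (X 0 k)^*)
    + X 0 k0 * (X 0 k0)^* * q Y.
  rewrite /q !mulr_sumr -!sumrB -!big_split /=.
  by apply: eq_bigr => k _; rewrite !mxE !rmorphB !rmorphM /=; ring.
rewrite bXY bYX !mulr0 !subr0 in qZ.
have : q Z <= 0.
  apply: q_nonpos => k; have [->|/others] := eqVneq k k0; last by right.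
  by left; rewrite mxE mulrC subrr.
rewrite qZ => qZ_le0; rewrite -(@pmulr_rle0 _ (X 0 k0 * (X 0 k0)^*)) ?mul_conjC_gt0 //.
by apply: le_trans qZ_le0; rewrite lerDr mulr_ge0 ?mul_conjC_ge0 ?ltW.
Qed.

Lemma char_poly_similar n (P D : 'M[C]_n) : P \in unitmx ->
  char_poly (invmx P *m D *m P) = char_poly D.
Proof.
move=> Pu; rewrite /char_poly /char_poly_mx.
set Pp := map_mx polyC P; set Pi := map_mx polyC (invmx P).
have PiPp : Pi *m Pp = 1%:M by rewrite -map_mxM mulVmx // map_mx1.
have -> : map_mx polyC (invmx P *m D *m P) = Pi *m map_mx polyC D *m Pp.
  by rewrite !map_mxM.
have Xe : ('X%:M : 'M[{poly C}]_n) = Pi *m 'X%:M *m Pp.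
  by rewrite -mulmxA -scalar_mxC mulmxA PiPp mul1mx.
by rewrite {1}Xe -mulmxBl -mulmxBr !det_mulmx mulrAC -det_mulmx PiPp det1 mul1r.
Qed.

Lemma hermitian_orthogonal_nonpos n (G : 'M[C]_n) (s : seq C) :
  G \is hermsymmx -> char_poly G = \prod_(x <- s) ('X - x%:P) ->
  (count (fun x => (0 < x)%R) s <= 1)%N ->
  forall u w : 'rV[C]_n, 0 < hform G u u -> hform G u w = 0 -> hform G w w <= 0.
Proof.
move=> Gh cpG pos1 u w.
pose P := spectralmx G; pose d := spectral_diag G.
have /orthomx_spectralP GE := hermitian_normalmx Gh.
have GE' : G = P^t* *m diag_mx d *m P by rewrite {1}GE invmx_unitary ?spectral_unitarymx.
have pe : perm_eq s [seq d 0 i | i <- enum 'I_n].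
  apply: prod_XsubC_eq; rewrite -cpG big_map big_enum /= GE.
  rewrite char_poly_similar ?spectral_unit //.
  by rewrite char_poly_trig ?diag_mx_is_trig //; apply: eq_bigr => i _; rewrite mxE eqxx.
have dpos1 : (#|[pred k | (0 < d 0 k)%R]| <= 1)%N.
  have -> : #|[pred k | (0 < d 0 k)%R]| = count (fun k => (0 < d 0 k)%R) (enum 'I_n).
    by rewrite cardE -size_filter /enum_mem filter_predT.
  by rewrite -(count_map (fun k => d 0 k) (fun x => 0 < x)) -(seq.permP pe).
rewrite GE' !hform_conj; apply: diag_hform_orthogonal_nonpos => //.
exact: hermitian_spectral_diag_real.
Qed.

End HermitianForms.

Definition posgraph (n : nat) (G : 'M[Real]_n) : rel 'I_n := fun u v => 0 < G u v.

Lemma posgraph_sym n (G : 'M[Real]_n) : G^T = G -> ssrbool.symmetric (posgraph G).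
Proof. by move=> G_sym u v; rewrite /posgraph -[in LHS]G_sym mxE. Qed.

Section RealForms.
Variables (n : nat) (G : 'M[Real]_n).
Local Notation bform := (form_of_matrix idfun G).
Local Notation toC := (real_complex Real).

Lemma bform_sym : G^T = G -> forall x y : 'rV[Real]_n, bform x y = bform y x.
Proof.
move=> G_sym x y; rewrite /form_of_matrix !map_mx_id // -mxtrace_tr.
by rewrite !trmx_mul trmxK G_sym mulmxA.
Qed.

Lemma conj_real_complex (r : Real) : (toC r)^* = toC r.
Proof. by apply/conj_Creal/complex_realP; exists r. Qed.

Lemma map_bform (x y : 'rV[Real]_n) :
  toC (bform x y) = form_of_matrix Num.conj (map_mx toC G) (map_mx toC x) (map_mx toC y).
Proof.
rewrite /form_of_matrix.
have -> : map_mx Num.conj (map_mx toC y)^T = map_mx toC (map_mx idfun y^T).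
  by apply/matrixP => i j; rewrite !mxE conj_real_complex.
by rewrite !trace_mx11 -!map_mxM [RHS]mxE.
Qed.

Hypotheses (G_sym : G^T = G) (G_af : antiferromagnetic G).

Lemma antiferromagnetic_orthogonal_nonpos (x y : 'rV[Real]_n) :
  0 < bform x x -> bform x y = 0 -> bform y y <= 0.
Proof.
move=> Qx Bxy; have [s [cpG pos1]] := G_af.
have Gc_herm : map_mx toC G \is hermsymmx.
  apply/is_hermitianmxP; rewrite expr0 scale1r; apply/matrixP => i j.
  by rewrite !mxE conj_real_complex -[in LHS]G_sym mxE.
have cpGc : char_poly (map_mx toC G) = \prod_(c <- map toC s) ('X - c%:P).
  by rewrite -map_char_poly cpG map_prod_XsubC big_map.
have pos1c : (count (fun c => (0 < c)%R) (map toC s) <= 1)%N.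
  rewrite count_map; apply: leq_trans pos1; apply: sub_count => r /=.
  by rewrite -(rmorph0 toC) ltcR.
have := hermitian_orthogonal_nonpos Gc_herm cpGc pos1c
  (u := map_mx toC x) (w := map_mx toC y).
rewrite -!map_bform Bxy -(rmorph0 toC) ltcR lecR; exact.
Qed.

Lemma antiferromagnetic_reverse_CS (x y : 'rV[Real]_n) :
  0 < bform x x -> bform x x * bform y y <= bform x y ^+ 2.
Proof.
move=> Qx; set a := bform x x; set b := bform x y.
pose z := a *: y - b *: x.
have Bxz : bform x z = 0 by rewrite linearB !linearZ /= -/a -/b mulrC subrr.
have Qz : bform z z = a * (a * bform y y - b ^+ 2).
  rewrite linearBl !linearZl !linearB !linearZ /= (bform_sym G_sym y x) -/a -/b.
  by ring.
have := antiferromagnetic_orthogonal_nonpos Qx Bxz.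
by rewrite Qz pmulr_rle0 // subr_le0.
Qed.

Lemma antiferromagnetic_dominate_edges :
  (forall i j, 0 <= G i j) -> nonisolated_dominate_edges (posgraph G).
Proof.
move=> G_ge0 v z u w; rewrite /posgraph => Gvz Guw.
have Gs i j : G i j = G j i by rewrite -[in LHS]G_sym mxE.
have G0 i j : ~~ (0 < G i j) -> G i j = 0.
  by move=> Gij; apply/eqP; rewrite eq_le G_ge0 andbT leNgt.
have [|/G0 Gvu] := boolP (0 < G v u); first by left.
have [|/G0 Gvw] := boolP (0 < G v w); first by right.
(* Otherwise [b] is positive and orthogonal to [e_v], and the reverse
   Cauchy-Schwarz inequality between [b] and [e_v + s e_z] fails for small [s]. *)
exfalso; pose b : 'rV[Real]_n := 'e_u + 'e_w.
have Qb : 0 < bform b b.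
  rewrite linearDl !linearD /= !rV_formee (Gs w u).
  by have := G_ge0 u u; have := G_ge0 w w; lra.
set q := bform b b in Qb; set beta := bform b 'e_z; set g := G v z in Gvz.
pose s := q * g / (beta ^+ 2 + 1).
have s_gt0 : 0 < s by rewrite divr_gt0 ?mulr_gt0 // ltr_wpDl ?sqr_ge0.
have hs : s * (beta ^+ 2 + 1) = q * g by rewrite divfK // gt_eqF // ltr_wpDl ?sqr_ge0.
pose y : 'rV[Real]_n := 'e_v + s *: 'e_z.
have Bby : bform b y = s * beta.
  rewrite linearD linearZ /= linearDl /= !rV_formee (Gs u v) (Gs w v) Gvu Gvw.
  by rewrite addr0 add0r.
have Qy : bform y y = G v v + 2 * s * g + s ^+ 2 * G z z.
  by rewrite linearDl linearZl !linearD !linearZ /= !rV_formee (Gs z v) -/g; ring.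
have := antiferromagnetic_reverse_CS y Qb; rewrite Bby Qy => CS.
have h1 : s * (2 * q * g) <= s * (s * beta ^+ 2).
  have := mulr_ge0 (ltW Qb) (G_ge0 v v).
  have := mulr_ge0 (mulr_ge0 (ltW Qb) (sqr_ge0 s)) (G_ge0 z z).
  move: CS; nra.
have h2 : 2 * q * g <= s * beta ^+ 2 by rewrite -(ler_pM2l s_gt0).
have := mulr_gt0 Qb Gvz; nra.
Qed.

End RealForms.

Section ChromaticSupport.
Variables (t : nat) (e : rel 'I_t) (n : nat) (G : 'M[Real]_n).
Hypotheses (e_sym : ssrbool.symmetric e) (e_irr : irreflexive e).
Hypotheses (G_sym : G^T = G) (G_ge0 : forall i j, 0 <= G i j).

Definition monomial_of (phi : 'I_t -> 'I_n) : 'X_{1..n} := (\sum_x U_(phi x))%MM.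

Lemma monomial_ofE phi v : monomial_of phi v = fcount phi v.
Proof.
rewrite /monomial_of mnm_sumE /fcount -sum1_card [RHS]big_mkcond /=.
by apply: eq_bigr => x _; rewrite mnm1E inE; case: (phi x == v).
Qed.

Lemma prod_mpolyX_monomial_of phi :
  \prod_(x : 'I_t) ('X_(phi x) : {mpoly Real[n]}) = 'X_[monomial_of phi].
Proof.
rewrite /monomial_of; elim/big_rec2: _ => [|x m p _ ->]; first by rewrite mpolyX0.
by rewrite mpolyXD.
Qed.

Lemma hom_posgraphE (phi : 'I_t -> 'I_n) :
  hom e (posgraph G) phi <->
  forall p : 'I_t * 'I_t, (p.1 < p.2)%N && e p.1 p.2 -> 0 < G (phi p.1) (phi p.2).
Proof.
split=> [hphi p /andP [_ /hphi] //|pos x y exy].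
case: (ltngtP x y) => xy.
- by apply: (pos (x, y)); rewrite /= xy exy.
- by rewrite (posgraph_sym G_sym); apply: (pos (y, x)); rewrite /= xy e_sym exy.
- by move: exy; rewrite (val_inj xy) e_irr.
Qed.

Lemma chromatic_supportP (m : 'X_{1..n}) :
  hsupport (chromatic_fun e G) m <->
  exists2 phi : 'I_t -> 'I_n, hom e (posgraph G) phi & forall v, m v = fcount phi v.
Proof.
pose wt (phi : {ffun 'I_t -> 'I_n}) :=
  \prod_(p : 'I_t * 'I_t | (p.1 < p.2)%N && e p.1 p.2) G (phi p.1) (phi p.2).
have wt_ge0 phi : 0 <= wt phi by apply: prodr_ge0 => p _; apply: G_ge0.
have coefE : (chromatic_fun e G)@_m = \sum_phi wt phi * (monomial_of phi == m)%:R.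
  rewrite /chromatic_fun raddf_sum; apply: eq_bigr => phi _.
  by rewrite /= prod_mpolyX_monomial_of mul_mpolyC mcoeffZ mcoeffX.
rewrite /hsupport mcoeff_msupp coefE psumr_eq0 => [|phi _]; last by rewrite mulr_ge0.
split=> [/allPn [phi _ /=]|[phi /hom_posgraphE pos cnt]].
  rewrite mulf_eq0 negb_or pnatr_eq0 eqb0 negbK => /andP [wt_neq0 /eqP <-].
  exists (fun x => phi x) => [|v]; last exact: monomial_ofE.
  apply/hom_posgraphE => p Pp; rewrite lt_def G_ge0 andbT.
  by move: wt_neq0; rewrite prodf_seq_neq0 => /allP /(_ p (mem_index_enum _)); rewrite Pp.
apply/allPn; exists (finfun phi); rewrite ?mem_index_enum //= mulf_eq0 negb_or.
have -> : monomial_of (finfun phi) = m.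
  by apply/mnmP => v; rewrite monomial_ofE cnt; apply: eq_card => x; rewrite !inE ffunE.
rewrite eqxx oner_eq0 andbT prodf_seq_neq0; apply/allP => p _; apply/implyP => Pp.
by rewrite !ffunE gt_eqF ?pos.
Qed.

Lemma M_convex_chromaticE :
  M_convex (hsupport (chromatic_fun e G)) <-> count_exchange (hom e (posgraph G)).
Proof.
have supp c : hom e (posgraph G) c -> hsupport (chromatic_fun e G) (monomial_of c).
  by move=> hc; apply/chromatic_supportP; exists c => // v; rewrite monomial_ofE.
split=> [conv phi psi hphi hpsi i lt_i|ex a b].
  have lt_mi : (monomial_of psi i < monomial_of phi i)%N by rewrite !monomial_ofE.
  have [j [lt_j [m [/chromatic_supportP [chi hchi cnt] [mi [mj mk]]]]]] :=
    conv _ _ (supp _ hphi) (supp _ hpsi) i lt_mi.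
  exists j; first by rewrite -!monomial_ofE.
  exists chi => //; split=> [|| k ki kj]; rewrite -cnt -?monomial_ofE ?mi ?mj ?mk //.
move=> /chromatic_supportP [phi hphi ma] /chromatic_supportP [psi hpsi mb] i lt_i.
have lt_phi_i : (fcount psi i < fcount phi i)%N by rewrite -ma -mb.
have [j lt_j [chi hchi [chi_i chi_j chi_k]]] := ex phi psi hphi hpsi i lt_phi_i.
exists j; split; first by rewrite ma mb.
exists (monomial_of chi); split; first exact: supp.
rewrite !monomial_ofE chi_i chi_j !ma; split=> //; split=> // k ki kj.
by rewrite monomial_ofE chi_k // ma.
Qed.

End ChromaticSupport.

Lemma connected_no_isolated (t : nat) (e : rel 'I_t) :
  (2 <= t)%N -> connected_graph e -> forall x, exists y, e x y.
Proof.
move=> t2 e_conn x.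
have [y yx] : exists y : 'I_t, y != x.
  have [x0|x_neq0] := eqVneq (nat_of_ord x) 0%N.
    by exists (Ordinal t2); apply/eqP => /(congr1 val) /=; rewrite x0.
  by exists (Ordinal (ltnW t2)); apply/eqP => /(congr1 val) /= x0; rewrite -x0 in x_neq0.
have /connectP [[|z p] /= e_path y_last] := e_conn x y.
  by move: yx; rewrite y_last eqxx.
by case/andP: e_path => exz _; exists z.
Qed.

Lemma hom_posgraph_Kq (t : nat) (e : rel 'I_t) q (c : 'I_t -> 'I_q) :
  hom e (posgraph (Kq q)) c <-> proper e c.
Proof.
have Kq_pos a b : posgraph (Kq q) a b = (a != b).
  by rewrite /posgraph /Kq mxE; case: (a != b); rewrite ?ltr01 ?ltxx.
by split=> hc x y /hc; rewrite Kq_pos.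
Qed.

Unset Implicit Arguments.

Theorem proposition3p3 (t : nat) (e : rel 'I_t) :
  (2 <= t)%N -> simple_graph e -> connected_graph e ->
  (exists q : nat, (t <= q)%N /\ M_convex (hsupport (chromatic_fun e (Kq q)))) ->
  forall (n : nat) (G : 'M[Real]_n), weighted_graph G -> antiferromagnetic G ->
    M_convex (hsupport (chromatic_fun e G)).
Proof.
move=> t2 [e_sym e_loopless] e_conn [q [tq Kq_conv]] n G [G_sym G_ge0] G_af.
have e_irr : irreflexive e := fun x => negbTE (e_loopless x).
have Kq_sym : (Kq q)^T = Kq q by apply/matrixP => a b; rewrite !mxE eq_sym.
have Kq_ge0 a b : 0 <= Kq q a b by rewrite mxE ler0n.
have Kq_ex := (M_convex_chromaticE e_sym e_irr Kq_sym Kq_ge0).1 Kq_conv.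
have proper_ex :=
  count_exchange_proper e_irr tq (eq_count_exchange (@hom_posgraph_Kq _ e q) Kq_ex).
apply/(M_convex_chromaticE e_sym e_irr G_sym G_ge0).
apply: (hom_count_exchange e_irr (connected_no_isolated t2 e_conn) (posgraph_sym G_sym)).
  exact: antiferromagnetic_dominate_edges.
exact: proper_ex.
Qed.
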